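(* Let $R$ be a finite commutative ring, $K\le R^\times$, and $\mathcal A=\mathcal A(K,R)$ the multiplication S-ring of $\mathrm{Cyc}(K,R)$. Then $\mathcal S^*(\mathcal A)$ contains the sets $rK$ for all $r\in R^\times$ and the sets $(1+rK)\cap R^\times$ for all $r\in R$.
   Context: All rings have an identity. A scheme on a finite set $V$ is a pair $(V,\mathcal R)$, $\mathcal R$ a partition of $V\times V$ into nonempty basis relations, closed under transposition, with the diagonal a union of basis relations and with the intersection numbers $|\{y:(x,y)\in R_1,(y,z)\in R_2\}|$ depending only on the basis relation containing $(x,z)$; relations are unions of basis relations. For a set $\mathcal M$ of relations, $[\mathcal C,\mathcal M]$ is the smallest scheme on $V$ having all relations of $\mathcal C$ and of $\mathcal M$ as relations; $\mathcal C_w=[\mathcal C,\{(w,w)\}]$. If $\Delta(U)$ is a relation, the restriction $\mathcal C_U$ is the scheme on $U$ with basis relations the nonempty $S\cap U^2$. $\mathrm{Iso}(\mathcal C)$ is the group of permutations of $V$ permuting the basis relations; for $\Gamma\le\mathrm{Iso}(\mathcal C)$, $\mathcal C^\Gamma$ is the scheme whose relations are the $\Gamma$-invariant relations of $\mathcal C$. For $K\le R^\times$, $\mathcal C=\mathrm{Cyc}(K,R)$ is the scheme on $R$ with basis relations $\{(x,y): y-x\in rK\}$, $r\in R$. Put $u=0$; then $\mathcal C'=((\mathcal C_u)_{R^\times})^{R^\times_{right}}$, where $R^\times_{right}=\{x\mapsto xa: a\in R^\times\}$, is a scheme on $R^\times$ whose basis relations are invariant under $R^\times_{right}$, hence each is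 of the form $R(X)=\{(g,xg): g\in R^\times, x\in X\}$ for some $X\subseteq R^\times$. An S-ring over a finite group $G$ is a subring of $\mathbb Z[G]$ with $\mathbb Z$-basis $\{\sum_{x\in X}x: X\in\mathcal S\}$ for a partition $\mathcal S$ of $G$ with $\{1\}\in\mathcal S$ and $X\in\mathcal S\Rightarrow X^{-1}\in\mathcal S$; $\mathcal S^*$ denotes the set of unions of members of $\mathcal S$ (basic sets). The multiplication S-ring $\mathcal A(K,R)$ is the S-ring over $R^\times$ whose basic sets are the sets $X$ with $R(X)$ a basis relation of $\mathcal C'$. *)

From mathcomp Require Import all_boot all_fingroup all_algebra.
Set Implicit Arguments. Unset Strict Implicit. Unset Printing Implicit Defensive.
Import GRing.Theory.
Local Open Scope ring_scope.

Section Schemes.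
Variable V : finType.

Definition transp (S : {set V * V}) : {set V * V} := [set (xy.2, xy.1) | xy in S].
Definition diagR : {set V * V} := [set (x, x) | x : V].
Definition unions (B : {set {set V * V}}) : {set {set V * V}} :=
  [set \bigcup_(S in Q) S | Q : {set {set V * V}} in powerset B].
Definition inum (S1 S2 : {set V * V}) (x z : V) : nat :=
  #|[set y | ((x, y) \in S1) && ((y, z) \in S2)]|.
Definition is_scheme (P : {set {set V * V}}) : bool :=
  [&& partition P [set: V * V],
      [forall S in P, transp S \in P],
      diagR \in unions P &
      [forall S1 in P, forall S2 in P, forall T in P, forall xz in T, forall xz' in T,
         inum S1 S2 xz.1 xz.2 == inum S1 S2 xz'.1 xz'.2]].
(* the set of relations of the smallest scheme [.,M] having all relations in M
   as relations: intersection of the relation sets of all such schemes *)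
Definition closure_rels (M : {set {set V * V}}) : {set {set V * V}} :=
  \bigcap_(Q : {set {set V * V}} | is_scheme Q && (M \subset unions Q)) unions Q.
(* basis relations = minimal nonempty relations *)
Definition atoms (A : {set {set V * V}}) : {set {set V * V}} :=
  [set S in A | (S != set0) &&
     [forall T in A, (T \subset S) ==> ((T == set0) || (T == S))]].
Definition restr_basis (B : {set {set V * V}}) (U : {set V}) : {set {set V * V}} :=
  [set S :&: setX U U | S in B & S :&: setX U U != set0].
End Schemes.

Section Multiplication.
Variable R : finComUnitRingType.
Variable K : {group {unit R}}.

Definition Uset : {set R} := [set x : R | x \is a GRing.unit].
Definition rK (r : R) : {set R} := [set r * val k | k in K].
Definition cyc_basis : {set {set R * R}} :=
  [set [set xy : R * R | xy.2 - xy.1 \in rK r] | r : R].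
(* basis relations of C_u = [C, {(u,u)}], u = 0 *)
Definition C0_basis : {set {set R * R}} :=
  atoms (closure_rels (cyc_basis :|: [set [set ((0 : R), (0 : R))]])).
Definition CU_basis : {set {set R * R}} := restr_basis C0_basis Uset.
Definition right_inv (T : {set R * R}) : bool :=
  [forall a in Uset, forall xy in T, (xy.1 * a, xy.2 * a) \in T].
(* basis relations of C' = ((C_u)_{R^x})^{R^x_right} *)
Definition Cp_basis : {set {set R * R}} :=
  atoms [set T in unions CU_basis | right_inv T].
Definition Rrel (X : {set R}) : {set R * R} :=
  [set gy : R * R | (gy.1 \in Uset) && [exists x in X, gy.2 == x * gy.1]].
(* basic sets of the multiplication S-ring A(K,R) *)
Definition basic_sets : {set {set R}} :=
  [set X : {set R} | (X \subset Uset) && (Rrel X \in Cp_basis)].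
Definition in_Sstar (Y : {set R}) : bool :=
  Y == \bigcup_(X in basic_sets | X \subset Y) X.
End Multiplication.

(* In C_0 = [Cyc(K,R), {(0,0)}] every basis relation S preserves the K-orbits of both
   coordinates: if (x,y) and (x',y') lie in S, compose the basis relations S1 of (x,0)
   and S2 of (0,y); the intersection number of S1 and S2 at (x',y') is positive, and
   S2 only leaves from 0 because {(0,0)} is a relation, so x' ∈ xK and y' ∈ yK.
   Hence {(x,y) : y ∈ rxK} and {(x,y) : y - x ∈ rxK} are relations of C_0.  Their
   restrictions to R^x are R(rK) and R((1 + rK) ∩ R^x), which are invariant under
   right multiplication and therefore unions of basis relations R(X) of C'. *)
From mathcomp Require Import all_boot all_fingroup all_algebra.
From mathcomp Require Import zify.
Import GRing.Theory.
Local Open Scope ring_scope.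
Set Implicit Arguments. Unset Strict Implicit.

Section SchemeRelations.
Variable V : finType.
Implicit Types (P Q F M : {set {set V * V}}) (A B S T W : {set V * V}) (U : {set V}).

Definition setD_closed F := forall A B, A \in F -> B \in F -> A :\: B \in F.

Lemma unionsP P A :
  reflect (exists2 P' : {set {set V * V}}, P' \subset P & A = \bigcup_(S in P') S) (A \in unions P).
Proof.
apply: (iffP imsetP) => [[P' sP' ->]|[P' sP' ->]]; exists P' => //.
  by rewrite powersetE in sP'.
by rewrite powersetE.
Qed.

Lemma unions_cover P A :
  (forall p, p \in A -> exists2 S, S \in P & (p \in S) && (S \subset A)) -> A \in unions P.
Proof.
move=> coverA; apply/unionsP; exists [set S in P | S \subset A].
  by apply/subsetP => S; rewrite inE => /andP[].
apply/setP => p; apply/idP/bigcupP.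
- by move=> /coverA [S SP /andP[pS SA]]; exists S; rewrite ?inE ?SP.
- by move=> [S]; rewrite inE => /andP[_ /subsetP SA] /SA.
Qed.

Lemma trivIset_unions_setD P : trivIset P -> setD_closed (unions P).
Proof.
move=> /trivIsetP tI A B /unionsP[P1 sP1 ->] /unionsP[P2 sP2 ->].
apply/unionsP; exists (P1 :\: P2); first exact: subset_trans (subsetDl _ _) sP1.
apply/setP => p; rewrite inE; apply/andP/bigcupP.
- move=> [p_notin2 /bigcupP[S SP1 pS]]; exists S => //; rewrite inE SP1 andbT.
  by apply: contra p_notin2 => SP2; apply/bigcupP; exists S.
- case=> S; rewrite inE => /andP[SnP2 SP1] pS; split; last by apply/bigcupP; exists S.
  apply/bigcupP => -[S' S'P2 pS'].
  have neqSS' : S != S' by apply: contraNneq SnP2 => ->.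
  have := tI S S' (subsetP sP1 _ SP1) (subsetP sP2 _ S'P2) neqSS'.
  by move/disjointFr => /(_ p pS); rewrite pS'.
Qed.

Lemma atoms_cover F A p : setD_closed F -> A \in F -> p \in A ->
  exists2 T, T \in atoms F & (p \in T) && (T \subset A).
Proof.
move=> FD AF pA.
have [|T /and3P[TF pT TA] Tmin] :=
  @arg_minnP _ A (fun T => [&& T \in F, p \in T & T \subset A]) (fun T => #|T|).
  by rewrite AF pA subxx.
exists T; last by rewrite pT TA.
rewrite inE TF /=; apply/andP; split; first by apply/set0Pn; exists p.
apply/forallP => T'; apply/implyP => T'F; apply/implyP => T'T.
case pT': (p \in T').
  by apply/orP; right; rewrite eqEcard T'T Tmin // T'F pT' (subset_trans T'T TA).
have T_gt0 : (0 < #|T|)%N by apply/card_gt0P; exists p.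
suff : (#|T| <= #|T :\: T'|)%N.
  by rewrite cardsD (setIidPr T'T) -cards_eq0 => le_TD; apply/orP; left; lia.
by rewrite Tmin // FD // inE pT' pT (subset_trans (subsetDl _ _) TA).
Qed.

Lemma trivIset_atoms F : setD_closed F -> trivIset (atoms F).
Proof.
move=> FD; apply/trivIsetP => A B.
rewrite !inE => /andP[AF /andP[A0 /forallP Amin]] /andP[BF /andP[_ /forallP Bmin]] neqAB.
have ABF : A :&: B \in F by rewrite -[A :&: B]set0U -(setDv A) -setDDr !FD.
have := Amin (A :&: B); rewrite ABF subsetIl /= => /orP[|/eqP/setIidPl AB].
  by rewrite -setI_eq0.
by have := Bmin A; rewrite AF AB (negbTE A0) (negbTE neqAB).
Qed.

Lemma trivIset_restr P U : trivIset P -> trivIset (restr_basis P U).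
Proof.
move=> /trivIsetP tI; apply/trivIsetP => _ _ /imsetP[A HA ->] /imsetP[B HB ->] neq.
rewrite !inE in HA HB; case/andP: HA => AP _; case/andP: HB => BP _.
have neqAB : A != B by apply: contraNneq neq => ->.
exact: disjointWl (subsetIl _ _) (disjointWr (subsetIl _ _) (tI A B AP BP neqAB)).
Qed.

Lemma unions_restr_sub P U T : T \in unions (restr_basis P U) -> T \subset setX U U.
Proof.
case/unionsP => P' sP' ->; apply/bigcupsP => _ /(subsetP sP') /imsetP[A _ ->].
exact: subsetIr.
Qed.

Lemma restr_atoms_unions F U W : setD_closed F -> W \in F ->
  W :&: setX U U \in unions (restr_basis (atoms F) U).
Proof.
move=> FD WF; apply: unions_cover => p; rewrite inE => /andP[pW pUU].
have [S Sat /andP[pS SW]] := atoms_cover FD WF pW.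
exists (S :&: setX U U); last by rewrite inE pS pUU setSI.
by apply/imsetP; exists S; rewrite // inE Sat; apply/set0Pn; exists p; rewrite inE pS.
Qed.

Lemma closure_rels_setD M : setD_closed (closure_rels M).
Proof.
move=> A B /bigcapP A_rel /bigcapP B_rel; apply/bigcapP => Q /andP[Qsch QM].
apply: trivIset_unions_setD (A_rel Q _) (B_rel Q _); rewrite ?Qsch ?QM //.
by case/and4P: Qsch => /and3P[].
Qed.

Lemma mem_closure_rels M A :
  (forall Q, is_scheme Q -> M \subset unions Q -> A \in unions Q) -> A \in closure_rels M.
Proof. by move=> A_rel; apply/bigcapP => Q /andP[]; apply: A_rel. Qed.

Lemma scheme_trivIset Q : is_scheme Q -> trivIset Q.
Proof. by case/and4P => /and3P[]. Qed.

Lemma scheme_cover Q p : is_scheme Q -> exists2 S, S \in Q & p \in S.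
Proof.
case/and4P => /and3P[/eqP covQ _ _] _ _ _.
have : p \in cover Q by rewrite covQ inE.
by case/bigcupP => S SQ pS; exists S.
Qed.

Lemma basis_sub_unions Q S A p : trivIset Q -> S \in Q -> p \in S ->
  A \in unions Q -> p \in A -> S \subset A.
Proof.
move=> /trivIsetP tI SQ pS /unionsP[P' sP' ->] /bigcupP[S' S'P pS'].
have [->|neq] := eqVneq S S'; first exact: bigcup_sup.
by have /disjointFr/(_ pS) := tI S S' SQ (subsetP sP' _ S'P) neq; rewrite pS'.
Qed.

Lemma saturated_unions Q A : is_scheme Q ->
  {in Q, forall S, {in S &, forall p q, p \in A -> q \in A}} -> A \in unions Q.
Proof.
move=> Qsch Asat; apply: unions_cover => p pA.
have [S SQ pS] := scheme_cover p Qsch; exists S; rewrite // pS.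
by apply/subsetP => q qS; exact: Asat SQ p q pS qS pA.
Qed.

Lemma scheme_comp_transfer Q S1 S2 T x z x' z' :
  is_scheme Q -> S1 \in Q -> S2 \in Q -> T \in Q -> (x, z) \in T -> (x', z') \in T ->
  (exists y, ((x, y) \in S1) && ((y, z) \in S2)) ->
  exists y, ((x', y) \in S1) && ((y, z') \in S2).
Proof.
case/and4P => _ _ _ /forall_inP inumQ S1Q S2Q TQ xzT xzT' [y xyz].
have /forall_inP/(_ _ S2Q)/forall_inP/(_ _ TQ)/forall_inP/(_ _ xzT) := inumQ _ S1Q.
move=> /forall_inP/(_ _ xzT')/eqP /= inum_eq.
have : (0 < inum S1 S2 x' z')%N by rewrite -inum_eq card_gt0; apply/set0Pn; exists y; rewrite inE.
by rewrite card_gt0 => /set0Pn[y']; rewrite inE; exists y'.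
Qed.

End SchemeRelations.

Section MultiplicationSring.
Variable R : finComUnitRingType.
Variable K : {group {unit R}}.
Local Notation U := (Uset R).
Implicit Types (A B T W : {set R * R}) (X Y : {set R}).

Lemma rKP c x : reflect (exists2 k, k \in K & x = c * val k) (x \in rK K c).
Proof. by apply: (iffP imsetP) => [[k kK ->]|[k kK ->]]; exists k. Qed.

Lemma rK_refl c : c \in rK K c.
Proof. by apply/rKP; exists 1%g; rewrite ?group1 // FinRing.val_unit1 mulr1. Qed.

Lemma rK_mull a c x : x \in rK K c -> a * x \in rK K (a * c).
Proof. by case/rKP => k kK ->; apply/rKP; exists k; rewrite ?mulrA. Qed.

Lemma rK_transl c x : x \in rK K c -> rK K x = rK K c.
Proof.
case/rKP => k kK ->; apply/setP => y; apply/rKP/rKP => -[k' k'K ->].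
  by exists (k * k')%g; rewrite ?groupM // FinRing.val_unitM mulrA.
exists (k^-1 * k')%g; rewrite ?groupM ?groupV //.
by rewrite FinRing.val_unitM FinRing.val_unitV mulrA mulrK // (valP k).
Qed.

Lemma rK_divr c x y : x \is a GRing.unit -> (y \in rK K (c * x)) = (y / x \in rK K c).
Proof.
move=> xU; apply/rKP/rKP => -[k kK yE]; exists k => //.
  by rewrite yE mulrAC mulrK.
by rewrite -(divrK xU y) yE mulrAC.
Qed.

Lemma rK_unit c y : c \is a GRing.unit -> y \in rK K c -> y \is a GRing.unit.
Proof. by move=> cU /rKP[k _ ->]; rewrite unitrM cU (valP k). Qed.

Definition cyc_rel c := [set xy : R * R | xy.2 - xy.1 \in rK K c].
Definition C0_gens := cyc_basis K :|: [set [set ((0 : R), (0 : R))]].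

Lemma C0_basis_rel_orbits Q S x y x' y' :
  is_scheme Q -> C0_gens \subset unions Q -> S \in Q -> (x, y) \in S -> (x', y') \in S ->
  (x' \in rK K x) && (y' \in rK K y).
Proof.
move=> Qsch QM SQ xyS xyS'; have tI := scheme_trivIset Qsch.
have cycQ c : cyc_rel c \in unions Q.
  by apply: (subsetP QM); rewrite inE; apply/orP; left; apply/imsetP; exists c.
have [S1 S1Q xS1] := scheme_cover (x, 0) Qsch.
have [S2 S2Q yS2] := scheme_cover (0, y) Qsch.
have [D DQ zD] := scheme_cover (0, 0) Qsch.
have S1_cyc : S1 \subset cyc_rel (- x).
  by apply: basis_sub_unions tI S1Q xS1 (cycQ _) _; rewrite inE /= sub0r rK_refl.
have S2_cyc : S2 \subset cyc_rel y.
  by apply: basis_sub_unions tI S2Q yS2 (cycQ _) _; rewrite inE /= subr0 rK_refl.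
have D00 : D \subset [set (0, 0)].
  by apply: basis_sub_unions tI DQ zD _ _; rewrite ?inE // (subsetP QM) // !inE eqxx orbT.
(* S2 only leaves from 0: a pair (z,w) of S2 would otherwise have no D-predecessor. *)
have S2_src z w : (z, w) \in S2 -> z = 0.
  move=> zwS2; have [|u /andP[zuD _]] := scheme_comp_transfer Qsch DQ S2Q S2Q yS2 zwS2.
    by exists 0; rewrite zD yS2.
  by move/(subsetP D00): zuD; rewrite inE => /eqP[].
have [|z /andP[xzS1 zyS2]] := scheme_comp_transfer Qsch S1Q S2Q SQ xyS xyS'.
  by exists 0; rewrite xS1 yS2.
have z0 := S2_src _ _ zyS2; subst z.
move/(subsetP S2_cyc): zyS2; rewrite inE /= subr0 => ->; rewrite andbT.
move/(subsetP S1_cyc): xzS1; rewrite inE /= sub0r => /(rK_mull (-1)).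
by rewrite !mulN1r !opprK.
Qed.

Definition mul_rel r := [set xy : R * R | xy.2 \in rK K (r * xy.1)].
Definition shift_rel r := [set xy : R * R | xy.2 - xy.1 \in rK K (r * xy.1)].

Lemma mul_rel_closure r : mul_rel r \in closure_rels C0_gens.
Proof.
apply: mem_closure_rels => Q Qsch QM; apply: (saturated_unions Qsch) => S SQ.
move=> [x y] [x' y'] xyS xyS'; rewrite !inE /= => yrx.
have /andP[x'x y'y] := C0_basis_rel_orbits Qsch QM SQ xyS xyS'.
by rewrite (rK_transl (rK_mull r x'x)) -(rK_transl yrx).
Qed.

Lemma shift_rel_closure r : shift_rel r \in closure_rels C0_gens.
Proof.
apply: mem_closure_rels => Q Qsch QM; apply: (saturated_unions Qsch) => S SQ.
move=> [x y] [x' y'] xyS xyS'; rewrite !inE /= => yxrx.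
have /andP[x'x _] := C0_basis_rel_orbits Qsch QM SQ xyS xyS'.
have S_cyc : S \subset cyc_rel (y - x).
  apply: basis_sub_unions (scheme_trivIset Qsch) SQ xyS _ _; last by rewrite inE rK_refl.
  by apply: (subsetP QM); rewrite inE; apply/orP; left; apply/imsetP; exists (y - x).
rewrite (rK_transl (rK_mull r x'x)) -(rK_transl yxrx).
by have := subsetP S_cyc _ xyS'; rewrite inE.
Qed.

Lemma mem_Rrel X g h : ((g, h) \in Rrel X) = (g \in U) && (h / g \in X).
Proof.
rewrite inE /= [g \in U]inE; have [gU /=|//] := boolP (g \is a GRing.unit).
apply/existsP/idP => [[z /andP[zX /eqP ->]]|hgX]; first by rewrite mulrK.
by exists (h / g); rewrite hgX divrK ?eqxx.
Qed.

Lemma mul_rel_restr r : r \is a GRing.unit -> mul_rel r :&: setX U U = Rrel (rK K r).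
Proof.
move=> rU; apply/setP => -[x y]; rewrite mem_Rrel !inE /= andbC.
have [xU /=|//] := boolP (x \is a GRing.unit).
rewrite rK_divr //; apply/andP/idP => [[] //|yxr]; split=> //.
by rewrite -(divrK xU y) unitrM xU (rK_unit rU yxr).
Qed.

Lemma shift_rel_restr r :
  shift_rel r :&: setX U U = Rrel ([set 1 + y | y in rK K r] :&: U).
Proof.
apply/setP => -[x y]; rewrite mem_Rrel !inE /= andbC.
have [xU /=|//] := boolP (x \is a GRing.unit).
rewrite rK_divr // mulrBl divrr // unitrM unitrV xU andbT andbC.
congr (_ && _); apply/idP/imsetP => [yx1|[z zr ->]]; last by rewrite addrC addKr.
by exists (y / x - 1); rewrite // addrC subrK.
Qed.

Lemma right_invP T a x y :
  right_inv T -> a \is a GRing.unit -> (x, y) \in T -> (x * a, y * a) \in T.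
Proof.
by move=> /forall_inP Tinv aU xyT; apply: (forall_inP (Tinv a _) (x, y)); rewrite ?inE.
Qed.

Lemma right_inv_setD A B : right_inv A -> right_inv B -> right_inv (A :\: B).
Proof.
move=> Ainv Binv; apply/forall_inP => a; rewrite inE => aU; apply/forall_inP => -[x y].
rewrite !inE /= => /andP[xyB xyA]; rewrite (right_invP Ainv aU xyA) andbT.
have aVU : a^-1 \is a GRing.unit by rewrite unitrV.
move: xyB; apply: contra => /(right_invP Binv aVU).
by rewrite !mulrK.
Qed.

Lemma right_inv_Rrel X : right_inv (Rrel X).
Proof.
apply/forall_inP => a; rewrite inE => aU; apply/forall_inP => -[g h].
rewrite !mem_Rrel !inE /= => /andP[gU hgX].
by rewrite unitrM gU aU invrM // mulrA mulrK.
Qed.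

Lemma right_inv_Rrel_slice T :
  T \subset setX U U -> right_inv T -> T = Rrel [set z | (1, z) \in T].
Proof.
move=> TUU Tinv; apply/setP => -[g h]; rewrite mem_Rrel !inE.
apply/idP/andP => [ghT|[gU hgT]].
  have := subsetP TUU _ ghT; rewrite !inE => /andP[gU _]; split=> //.
  have gVU : g^-1 \is a GRing.unit by rewrite unitrV.
  by have := right_invP Tinv gVU ghT; rewrite divrr.
by have := right_invP Tinv gU hgT; rewrite mul1r divrK.
Qed.

Lemma C0_rel_restr W : W \in closure_rels C0_gens -> W :&: setX U U \in unions (CU_basis K).
Proof. exact: restr_atoms_unions (@closure_rels_setD _ _). Qed.

Lemma in_Sstar_of_CU Y : Rrel Y \in unions (CU_basis K) -> in_Sstar K Y.
Proof.
move=> Y_CU; apply/eqP/setP => y; apply/idP/bigcupP => [yY|[X /andP[_ /subsetP XY] /XY //]].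
pose F := [set T in unions (CU_basis K) | right_inv T].
have FD : setD_closed F.
  move=> A B; rewrite !inE => /andP[A_CU Ainv] /andP[B_CU Binv].
  rewrite right_inv_setD // trivIset_unions_setD //.
  exact/trivIset_restr/trivIset_atoms/closure_rels_setD.
have YF : Rrel Y \in F by rewrite inE Y_CU right_inv_Rrel.
have y1Y : (1, y) \in Rrel Y by rewrite mem_Rrel divr1 yY inE unitr1.
have [T Tat /andP[yT TY]] := atoms_cover FD YF y1Y.
have /andP[T_CU Tinv] : (T \in unions (CU_basis K)) && right_inv T.
  by move: Tat; rewrite !inE => /andP[].
have TUU := unions_restr_sub T_CU.
exists [set z | (1, z) \in T]; last by rewrite inE.
rewrite inE -right_inv_Rrel_slice // Tat andbT; apply/andP; split.
  by apply/subsetP => z; rewrite inE => /(subsetP TUU); rewrite inE => /andP[].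
by apply/subsetP => z; rewrite inE => /(subsetP TY); rewrite mem_Rrel divr1 => /andP[].
Qed.

End MultiplicationSring.

Unset Implicit Arguments.
Theorem theorem4p2 (R : finComUnitRingType) (K : {group {unit R}}) :
  (forall r : R, r \in Uset R -> in_Sstar K (rK K r)) /\
  (forall r : R, in_Sstar K ([set 1 + y | y in rK K r] :&: Uset R)).
Proof.
split => [r rU | r]; apply: in_Sstar_of_CU.
  rewrite inE in rU; rewrite -mul_rel_restr //.
  exact/C0_rel_restr/mul_rel_closure.
by rewrite -shift_rel_restr; exact/C0_rel_restr/shift_rel_closure.
Qed.
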